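(* Fix an integer base $B\ge 2$ and an integer $k\ge 0$. Assume Dickson's conjecture holds. Then for every positive integer $t$ there exists a positive integer $N$ such that $N, N+1, \ldots, N+t-1$ are all $k$-frugal.
   Context: For a positive integer $n$, $\delta(n)$ is the number of digits of $n$ in base $B$, i.e. $\delta(n)=k$ iff $B^{k-1}\le n<B^k$. Define $\delta'(1)=0$ and $\delta'(a)=\delta(a)$ for $a>1$. If $n=\prod_{i} p_i^{a_i}$ is the prime power factorisation, set $\phi(n)=\sum_i \big(\delta(p_i)+\delta'(a_i)\big)$ (with $\phi(1)=0$), and $h(n)=\delta(n)-\phi(n)$. A positive integer $n$ is $k$-frugal if $h(n)\ge k$ (for $k=0$ this means economical). Dickson's conjecture: for any finite family of linear functions $f_i(x)=a_i x+b_i$ ($i=1,\dots,s$) with integers $a_i\ge1$, $b_i$, if there is no integer $m>1$ dividing $f_1(x)f_2(x)\cdots f_s(x)$ for every integer $x$, then there are infinitely many positive integers $x$ for which $f_1(x),\dots,f_s(x)$ are all prime. *)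

From mathcomp Require Import all_boot all_order all_algebra.
Set Implicit Arguments. Unset Strict Implicit. Unset Printing Implicit Defensive.
Import Order.TTheory GRing.Theory Num.Theory.

(* delta B n : number of digits of n >= 1 in base B, i.e. the k with
   B^(k-1) <= n < B^k.  trunc_log B n is the largest e with B^e <= n. *)
Definition delta (B n : nat) : nat := (trunc_log B n).+1.

Definition delta' (B a : nat) : nat := if a == 1 then 0 else delta B a.

Definition phi (B n : nat) : nat :=
  \sum_(pa <- prime_decomp n) (delta B pa.1 + delta' B pa.2).

Definition h (B n : nat) : int := (delta B n)%:Z - (phi B n)%:Z.

Definition frugal (B k n : nat) : Prop := 0 < n /\ (k%:Z <= h B n)%R.

Definition intprime (z : int) : bool := (0 < z)%R && prime `|z|%N.

Definition Dickson : Prop :=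
  forall fs : seq (int * int),
    all (fun ab => (1 <= ab.1)%R) fs ->
    ~ (exists m : int, (1 < m)%R /\
         forall x : int, (m %| (\prod_(ab <- fs) (ab.1 * x + ab.2))%R)%Z) ->
    forall M : int, exists x : int, (M < x)%R /\ (0 < x)%R /\
      all (fun ab => intprime (ab.1 * x + ab.2)%R) fs.

From mathcomp Require Import all_boot all_order all_algebra.
From mathcomp Require Import zify.
Set Implicit Arguments. Unset Strict Implicit. Unset Printing Implicit Defensive.
Import Order.TTheory GRing.Theory Num.Theory.

(* Pick distinct primes q_i > t, B and exponents E_i so large that c_i = i q_i^E_i is
   (k+1)-frugal: the factor q_i^E_i brings at least E_i + 1 digits but costs only about
   log_B E_i in phi.  The Chinese remainder theorem gives N0 with (t!)^2 | N0 and
   N0 + i = q_i^E_i mod q_i^(E_i+1), so that N0 + i = c_i d_i with d_i coprime to the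
   period M of these congruences.  Then N0 + i + M x = c_i (M/c_i x + d_i), and this
   family of linear forms is admissible: a prime dividing M divides no d_i, while any
   other prime exceeds t, so each form has at most one root modulo it.  Dickson's
   conjecture makes all the forms prime at some x > M, and multiplying by a new prime
   lowers h by at most one. *)

Lemma phiE B n : phi B n = \sum_(p <- primes n) (delta B p + delta' B (logn p n)).
Proof. by rewrite /phi prime_decompE big_map. Qed.

Lemma phi_mul_primeX B a q e : 0 < a -> prime q -> ~~ (q %| a) -> 0 < e ->
  phi B (a * q ^ e) = phi B a + delta B q + delta' B e.
Proof.
move=> a_gt0 q_pr q_ndvd e_gt0.
have qe_gt0 : 0 < q ^ e by rewrite expn_gt0 prime_gt0.
have q_nprimes : q \notin primes a by rewrite mem_primes q_pr a_gt0.
have primes_aq : perm_eq (primes (a * q ^ e)) (q :: primes a).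
  apply: uniq_perm; rewrite ?primes_uniq ?/= ?q_nprimes ?primes_uniq // => p.
  by rewrite primesM // primesX // (primes_prime q_pr) !inE orbC.
have logn_aqe p : p \in primes a -> logn p (a * q ^ e) = logn p a.
  move=> p_a; have q_neq_p : (p == q) = false by apply: contraNF q_nprimes => /eqP <-.
  by rewrite lognM // lognX (logn_prime _ q_pr) q_neq_p muln0 addn0.
rewrite !phiE (perm_big _ primes_aq) big_cons /=.
rewrite (eq_big_seq (fun p => delta B p + delta' B (logn p a))); last first.
  by move=> p /logn_aqe ->.
rewrite lognM // lognX (logn_prime _ q_pr) eqxx muln1 logn_coprime ?prime_coprime //.
by rewrite add0n addnC addnA.
Qed.

Lemma delta_mul B a b : 1 < B -> 0 < a -> 0 < b ->
  delta B a + delta B b <= (delta B (a * b)).+1.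
Proof.
move=> B_gt1 a_gt0 b_gt0; rewrite /delta addSn ltnS addnS ltnS.
by apply: trunc_log_max; rewrite // expnD leq_mul // trunc_logP.
Qed.

Lemma h_mul_prime B c p : 1 < B -> 0 < c -> prime p -> ~~ (p %| c) ->
  (h B c - 1 <= h B (c * p))%R.
Proof.
move=> B_gt1 c_gt0 p_pr p_ndvd; rewrite /h.
have := phi_mul_primeX B c_gt0 p_pr p_ndvd (ltn0Sn 0); rewrite expn1 => ->.
have := delta_mul B_gt1 c_gt0 (prime_gt0 p_pr).
rewrite /delta' /=; lia.
Qed.

Lemma double_leq_expn B n : 1 < B -> n.*2 <= B ^ n.
Proof. by case: n => // n B_gt1; rewrite expnS -mul2n leq_mul // ltn_expl. Qed.

Lemma h_mul_prime_power B k a q : 1 < B -> 0 < a -> prime q -> B <= q -> ~~ (q %| a) ->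
  (k%:Z <= h B (a * q ^ (B ^ (phi B a + delta B q + k))))%R.
Proof.
move=> B_gt1 a_gt0 q_pr B_le_q q_ndvd; set X := phi B a + delta B q + k.
rewrite /h phi_mul_primeX ?expn_gt0 ?(ltnW B_gt1) //.
have delta'_exp : delta' B (B ^ X) <= X.+1.
  by rewrite /delta' /delta trunc_expnK //; case: ifP.
have delta_ge : (B ^ X).+1 <= delta B (a * q ^ B ^ X).
  rewrite /delta ltnS; apply: trunc_log_max => //.
  apply: (@leq_trans (q ^ B ^ X)); first by rewrite leq_exp2r // expn_gt0 ltnW.
  by rewrite leq_pmull.
have := double_leq_expn X B_gt1; rewrite /X in delta'_exp delta_ge *; lia.
Qed.

Lemma frugal_mul_prime B k c p : 1 < B -> 0 < c -> (k.+1%:Z <= h B c)%R ->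
  prime p -> c < p -> frugal B k (c * p).
Proof.
move=> B_gt1 c_gt0 c_frugal p_pr lt_cp.
have := h_mul_prime B_gt1 c_gt0 p_pr (negbT (gtnNdvd c_gt0 lt_cp)).
by split; [rewrite muln_gt0 c_gt0 prime_gt0 | lia].
Qed.

Lemma chinese_big (m r : nat -> nat) n :
  (forall i j, i < j <= n -> coprime (m i) (m j)) ->
  exists x, forall i, i <= n -> x = r i %[mod m i].
Proof.
elim: n => [|n IHn] m_coprime.
  by exists (r 0) => i; rewrite leqn0 => /eqP ->.
have [x x_mod] : exists x, forall i, i <= n -> x = r i %[mod m i].
  by apply: IHn => i j /andP[lt_ij le_jn]; rewrite m_coprime ?lt_ij ?leqW.
set P := \prod_(i < n.+1) m i.
have P_coprime : coprime P (m n.+1).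
  apply: (big_ind (fun u => coprime u (m n.+1))) => [|u v|i _]; first exact: coprime1n.
    by rewrite coprimeMl => -> ->.
  by rewrite m_coprime ?ltn_ord /=.
exists (chinese P (m n.+1) x (r n.+1)) => i.
rewrite leq_eqVlt ltnS => /orP[/eqP -> | le_in]; first exact: chinese_modr.
have m_dvd_P : m i %| P by rewrite /P (bigD1 (Ordinal (le_in : i < n.+1))) //= dvdn_mulr.
by rewrite -(x_mod i le_in) -(modn_dvdm _ m_dvd_P) chinese_modl // modn_dvdm.
Qed.

Lemma prime_dvd_fact_leq p n : prime p -> p %| n`! -> p <= n.
Proof.
move=> p_pr; elim: n => [|n IHn]; first by rewrite dvdn1 => /eqP p1; rewrite p1 in p_pr.
rewrite factS Euclid_dvdM // => /orP[/dvdn_leq -> // | /IHn /leqW //].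
Qed.

Lemma dvdn_shifts_leq a n i j : a %| n + i -> a %| n + j -> i < j -> a <= j - i.
Proof.
move=> a_dvd_i a_dvd_j lt_ij; apply: dvdn_leq; first by rewrite subn_gt0.
by move: a_dvd_j; rewrite -[j](subnKC (ltnW lt_ij)) addnA dvdn_addr // addKn.
Qed.

Lemma eq_roots_linear_mod_prime p a b x y : prime p -> ~~ (p %| a) ->
  x < p -> y < p -> p %| a * x + b -> p %| a * y + b -> x = y.
Proof.
move=> p_pr p_ndvd_a; wlog le_xy : x y / x <= y.
  by move=> wlog_xy; case: (leqP x y) => [|/ltnW] le; [|symmetry]; apply: wlog_xy.
move=> lt_xp lt_yp x_root y_root.
have : p %| a * (y - x) by rewrite mulnBr -(subnDr b) dvdn_sub.
rewrite Euclid_dvdM // (negbTE p_ndvd_a) /=.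
have [|/dvdn_leq le_p] := posnP (y - x); first lia.
by move=> /le_p; lia.
Qed.

Lemma card_roots_prod_linear p (s : seq (nat * nat)) : prime p ->
  all (fun ab => ~~ (p %| ab.1)) s ->
  #|[set x : 'I_p | p %| \prod_(ab <- s) (ab.1 * x + ab.2)]| <= size s.
Proof.
move=> p_pr; elim: s => [|[a b] s IHs] /=.
  rewrite leqn0 cards_eq0 => _; apply/eqP/setP => x.
  by rewrite !inE big_nil dvdn1; apply: contraTF p_pr => /eqP ->.
case/andP=> p_ndvd_a /IHs card_s.
have -> : [set x : 'I_p | p %| \prod_(ab <- (a, b) :: s) (ab.1 * x + ab.2)]
    = [set x : 'I_p | p %| a * x + b]
      :|: [set x : 'I_p | p %| \prod_(ab <- s) (ab.1 * x + ab.2)].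
  by apply/setP => x; rewrite !inE big_cons Euclid_dvdM.
rewrite (leq_trans (leq_card_setU _ _).1) // -[(size s).+1]add1n leq_add //.
apply/card_le1_eqP => x y; rewrite !inE => x_root y_root.
by apply: val_inj; apply: eq_roots_linear_mod_prime y_root x_root.
Qed.

Lemma exists_nonroot_prod_linear p (s : seq (nat * nat)) : prime p -> size s < p ->
  all (fun ab => ~~ (p %| ab.1)) s ->
  exists x, ~~ (p %| \prod_(ab <- s) (ab.1 * x + ab.2)).
Proof.
move=> p_pr lt_sp a_ndvd.
case: (pickP [pred x : 'I_p | ~~ (p %| \prod_(ab <- s) (ab.1 * x + ab.2))]).
  by move=> x x_nonroot; exists x.
move=> all_roots.
have := card_roots_prod_linear p_pr a_ndvd.
have -> : [set x : 'I_p | p %| \prod_(ab <- s) (ab.1 * x + ab.2)] = setT.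
  by apply/setP => x; rewrite !inE; move: (all_roots x) => /= /negbFE.
by rewrite cardsT card_ord leqNgt lt_sp.
Qed.

Lemma exists_nonroot_prod_linear_coprime M (s : seq (nat * nat)) p : prime p ->
  {in s, forall ab, ab.1 %| M /\ coprime ab.2 M} -> (p <= size s -> p %| M) ->
  exists x, ~~ (p %| \prod_(ab <- s) (ab.1 * x + ab.2)).
Proof.
move=> p_pr s_M small_p_dvd_M.
have [p_dvd_M | p_ndvd_M] := boolP (p %| M).
  exists 0; rewrite Euclid_dvd_prod // big_has; apply/hasPn => ab /s_M[_ b_coprime].
  rewrite muln0 add0n; apply: contraL b_coprime => /coprime_dvdl p_coprime.
  by apply/negP => /p_coprime; rewrite prime_coprime // p_dvd_M.
apply: exists_nonroot_prod_linear => //.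
  by rewrite ltnNge; apply: contra p_ndvd_M.
by apply/allP => ab /s_M[a_dvd_M _]; apply: contra p_ndvd_M => /dvdn_trans ->.
Qed.

Lemma Dickson_nat (s : seq (nat * nat)) : Dickson -> all (fun ab => 0 < ab.1) s ->
  (forall p, prime p -> exists x, ~~ (p %| \prod_(ab <- s) (ab.1 * x + ab.2))) ->
  forall M, exists2 x, M < x & all (fun ab => prime (ab.1 * x + ab.2)) s.
Proof.
move=> dickson a_gt0 admissible M.
pose fs := [seq (Posz ab.1, Posz ab.2) | ab <- s].
have [||x [lt_Mx [x_gt0 fs_prime]]] := dickson fs _ _ (Posz M).
- by rewrite all_map; apply: sub_all a_gt0 => ab; rewrite /= lez_nat.
- move=> [m [m_gt1 m_dvd]]; case: m m_gt1 m_dvd => [n|//] n_gt1 n_dvd.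
  rewrite ltz_nat in n_gt1.
  have [x /negP[]] := admissible _ (pdiv_prime n_gt1).
  apply: dvdn_trans (pdiv_dvd n) _; move: (n_dvd (Posz x)).
  rewrite dvdzE big_map (eq_bigr (fun ab => Posz (ab.1 * x + ab.2))) //.
  by rewrite -(big_morph _ PoszM (erefl (Posz 1))).
- case: x lt_Mx x_gt0 fs_prime => [n|//] lt_Mn _ fs_prime; exists n => //.
  by move: fs_prime; rewrite all_map; apply: sub_all => ab /andP[_].
Qed.

Lemma primes_above n : exists2 q : nat -> nat, injective q & forall i, prime (q i) /\ n < q i.
Proof.
pose next_prime m := sval (prime_above m).
have next_primeP m : m < next_prime m /\ prime (next_prime m).
  by rewrite /next_prime; case: prime_above.
pose q i := iter i.+1 next_prime n.
have q_incr : {homo q : i j / i < j}.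
  by apply: (homo_ltn ltn_trans) => i; apply: (next_primeP _).1.
exists q; first exact/incn_inj/leq_mono.
elim=> [|i [_ lt_nq]]; first by have [] := next_primeP n.
by have [lt_q_next ?] := next_primeP (q i); split; last exact: ltn_trans lt_q_next.
Qed.

Section FrugalBlock.

Variables (B k t : nat) (q : nat -> nat).
Hypotheses (B_gt1 : 1 < B) (q_prime : forall i, prime (q i)) (q_inj : injective q).
Hypotheses (q_gt_t : forall i, t < q i) (q_ge_B : forall i, B <= q i).

Definition block_exponent i := B ^ (phi B i + delta B (q i) + k.+1).
Local Notation E := block_exponent.

Definition block_core i := i * q i ^ E i.
Local Notation c := block_core.

Definition block_modulus i := if i is 0 then t`! ^ 2 else q i ^ (E i).+1.
Local Notation m := block_modulus.

(* Makes N0 + i = q_i^E_i mod q_i^(E_i+1); the added multiple of the modulus keeps the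
   truncated subtraction exact. *)
Definition block_residue i := if i is 0 then 0 else i * q i ^ (E i).+1 + q i ^ E i - i.

Definition block_period := \prod_(i < t.+1) m i.
Local Notation M := block_period.

Lemma q_ndvd i : 0 < i <= t -> ~~ (q i %| i).
Proof. by case/andP=> i_gt0 le_it; rewrite gtnNdvd // (leq_ltn_trans le_it). Qed.

Lemma block_core_gt0 i : 0 < i -> 0 < c i.
Proof. by move=> i_gt0; rewrite muln_gt0 i_gt0 expn_gt0 prime_gt0. Qed.

Lemma block_core_frugal i : 0 < i <= t -> (k.+1%:Z <= h B (c i))%R.
Proof. by move=> i_range; apply: h_mul_prime_power; rewrite ?q_ndvd //; case/andP: i_range. Qed.

Lemma block_modulus_coprime i j : i < j <= t -> coprime (m i) (m j).
Proof.
case: j => [|j] /andP[lt_ij le_jt] //=; apply: coprimeXr; case: i lt_ij => [|i] lt_ij /=.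
  apply: coprimeXl; rewrite coprime_sym prime_coprime //.
  by apply: contraL (q_gt_t j.+1) => /(prime_dvd_fact_leq (q_prime _)); rewrite -leqNgt.
apply: coprimeXl; rewrite prime_coprime // dvdn_prime2 //.
by apply: contraTneq lt_ij => /q_inj [->]; rewrite ltnn.
Qed.

Lemma block_modulus_dvd i : i <= t -> m i %| M.
Proof. by move=> le_it; rewrite /M (bigD1 (Ordinal (le_it : i < t.+1))) //= dvdn_mulr. Qed.

Lemma block_core_dvd_period i : 0 < i <= t -> c i %| M.
Proof.
case/andP=> i_gt0 le_it.
have : m 0 * m i %| M by rewrite Gauss_dvd ?block_modulus_coprime ?i_gt0 ?block_modulus_dvd.
apply: dvdn_trans; rewrite /c /m; case: i i_gt0 le_it => // i _ le_it.
by rewrite dvdn_mul ?dvdn_exp2l // expnS dvdn_mulr // dvdn_fact.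
Qed.

Lemma block_period_gt0 : 0 < M.
Proof.
by apply: prodn_gt0 => -[[|i] lt_it]; rewrite /block_modulus /= ?expn_gt0 ?fact_gt0 ?prime_gt0.
Qed.

Lemma block_quotient_gt0 i : 0 < i <= t -> 0 < M %/ c i.
Proof.
move=> i_range; have /andP[i_gt0 _] := i_range.
by rewrite divn_gt0 ?block_core_gt0 // dvdn_leq ?block_period_gt0 // block_core_dvd_period.
Qed.

Variable N0 : nat.
Hypothesis N0_mod : forall i, i <= t -> N0 = block_residue i %[mod m i].

Lemma fact_sqr_dvd_N0 : t`! * t`! %| N0.
Proof. by have := N0_mod (leq0n t); rewrite /dvdn mulnn mod0n => ->. Qed.

Lemma block_remainder i : 0 < i <= t -> (N0 + i) %% q i ^ (E i).+1 = q i ^ E i.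
Proof.
case: i => // i /andP[_ le_it]; rewrite -modnDml (N0_mod le_it) modnDml /=.
have le_i_res : i.+1 <= i.+1 * q i.+1 ^ (E i.+1).+1 by rewrite leq_pmulr ?expn_gt0 ?prime_gt0.
rewrite subnK ?(leq_trans le_i_res) ?leq_addr // modnMDl.
by rewrite modn_small // ltn_exp2l ?prime_gt1.
Qed.

Lemma q_power_dvd i : 0 < i <= t -> q i ^ E i %| N0 + i.
Proof.
move=> i_range; rewrite (divn_eq (N0 + i) (q i ^ (E i).+1)) block_remainder //.
by rewrite dvdn_add // dvdn_mull // expnS dvdn_mull.
Qed.

Lemma block_core_dvd i : 0 < i <= t -> c i %| N0 + i.
Proof.
move=> i_range; rewrite Gauss_dvd ?q_power_dvd ?andbT //; last first.
  by rewrite coprimeXr // coprime_sym prime_coprime ?q_ndvd.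
by rewrite dvdn_addl // (dvdn_trans _ fact_sqr_dvd_N0) // dvdn_mulr // dvdn_fact.
Qed.

Definition block_cofactor i := (N0 + i) %/ c i.
Local Notation d := block_cofactor.

Lemma block_cofactorK i : 0 < i <= t -> d i * c i = N0 + i.
Proof. by move=> i_range; rewrite divnK // block_core_dvd. Qed.

Lemma block_cofactor_coprime_fact i : 0 < i <= t -> coprime (d i) t`!.
Proof.
move=> i_range; have /andP[i_gt0 _] := i_range; set g := gcdn (d i) t`!.
have ig_dvd_N0 : i * g %| N0.
  by rewrite (dvdn_trans _ fact_sqr_dvd_N0) // dvdn_mul ?dvdn_gcdr ?dvdn_fact.
have : i * g %| N0 + i.
  by rewrite -block_cofactorK // /c mulnCA mulnA dvdn_mulr // dvdn_mul ?dvdn_gcdl.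
by rewrite dvdn_addr // -{2}(muln1 i) dvdn_pmul2l // dvdn1.
Qed.

Lemma q_ndvd_block_cofactor i j : 0 < i <= t -> 0 < j <= t -> ~~ (q j %| d i).
Proof.
move=> i_range j_range; have [-> | neq_ji] := eqVneq j i.
  apply/negP => qi_dvd_d; have : q i ^ (E i).+1 %| N0 + i.
    by rewrite -block_cofactorK // expnS dvdn_mul // dvdn_mull.
  by rewrite /dvdn block_remainder // expn_eq0 (gtn_eqF (prime_gt0 (q_prime i))).
apply/negP => qj_dvd_d.
have qj_dvd_i : q j %| N0 + i.
  by rewrite -block_cofactorK // dvdn_mulr.
have qj_dvd_j : q j %| N0 + j.
  by rewrite (dvdn_trans _ (q_power_dvd j_range)) // -{1}(expn1 (q j)) dvdn_exp2l // expn_gt0 ltnW.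
have := q_gt_t j; case: (ltngtP i j) neq_ji => // [lt_ij | lt_ji] _.
  by have := dvdn_shifts_leq qj_dvd_i qj_dvd_j lt_ij; lia.
by have := dvdn_shifts_leq qj_dvd_j qj_dvd_i lt_ji; lia.
Qed.

Lemma block_cofactor_coprime i : 0 < i <= t -> coprime (d i) M.
Proof.
move=> i_range; apply: (big_ind (coprime (d i))) => [|u v|[[|j] /= lt_jt] _].
- exact: coprimen1.
- by rewrite coprimeMr => -> ->.
- by rewrite coprimeXr // block_cofactor_coprime_fact.
- by rewrite coprimeXr // coprime_sym prime_coprime // q_ndvd_block_cofactor.
Qed.

Lemma block_shift_factor i x : 0 < i <= t ->
  M * x + N0 + i = c i * (M %/ c i * x + d i).
Proof.
move=> i_range; rewrite mulnDr mulnA ![c i * _]mulnC divnK ?block_core_dvd_period //.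
by rewrite block_cofactorK // addnA.
Qed.

Lemma frugal_block : Dickson -> exists N, 0 < N /\ forall i, i < t -> frugal B k (N + i).
Proof.
move=> dickson; pose s := [seq (M %/ c i, d i) | i <- iota 1 t].
have s_M : {in s, forall ab, ab.1 %| M /\ coprime ab.2 M}.
  move=> ab /mapP[i]; rewrite mem_iota add1n ltnS => i_range -> /=.
  by split; [apply/dvdn_div/block_core_dvd_period | apply: block_cofactor_coprime].
have [||x lt_Mx s_prime] := Dickson_nat (s := s) dickson _ _ M.
- apply/allP => ab /mapP[i]; rewrite mem_iota add1n ltnS => i_range -> /=.
  exact: block_quotient_gt0.
- move=> p p_pr; apply: exists_nonroot_prod_linear_coprime s_M _ => //.
  rewrite size_map size_iota => le_pt; apply: dvdn_trans (block_modulus_dvd (leq0n t)).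
  by rewrite /block_modulus expnS dvdn_mulr // dvdn_fact ?prime_gt0.
exists (M * x + N0 + 1); split => [|i lt_it]; first by rewrite addn1.
have i_range : 0 < i.+1 <= t by [].
rewrite -addnA add1n block_shift_factor //.
apply: frugal_mul_prime (block_core_frugal i_range) _ _ => //; first exact: block_core_gt0.
  by apply: (allP s_prime (M %/ c i.+1, d i.+1)); apply/mapP; exists i.+1; rewrite ?mem_iota.
have le_cM : c i.+1 <= M := dvdn_leq block_period_gt0 (block_core_dvd_period i_range).
have le_xAx : x <= M %/ c i.+1 * x by rewrite leq_pmull // block_quotient_gt0.
lia.
Qed.

End FrugalBlock.

Theorem mainTheorem5 (B k : nat) (hB : 2 <= B) :
  Dickson ->
  forall t : nat, 0 < t ->
    exists N : nat, 0 < N /\ forall i : nat, i < t -> frugal B k (N + i).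
Proof.
move=> dickson t _.
have [q q_inj q_large] := primes_above (t + B).
have q_prime i : prime (q i) by case: (q_large i).
have q_gt_t i : t < q i by case: (q_large i); lia.
have q_ge_B i : B <= q i by case: (q_large i); lia.
have [N0 N0_mod] := chinese_big (block_residue B k q)
  (@block_modulus_coprime B k t q q_prime q_inj q_gt_t).
exact: (frugal_block hB q_prime q_inj q_gt_t q_ge_B N0_mod dickson).
Qed.
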